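(* Let $G$ be an infinite connected simple undirected graph with globally bounded vertex degree, $\deg(x)\le v<\infty$ for all vertices $x$, and suppose $G$ has internal scaling dimension $D$, i.e. $D_S(x)=D$ for every vertex $x$. Then the (unpurified) clique graph $G_{cl}$ also has internal scaling dimension $D$: for every clique $C$ of $G$, the limit $\lim_{n\to\infty}\ln(\#U^{cl}_n(C))/\ln n$ exists and equals $D$.
   Context: Graphs are simple and undirected with graph metric $d$ (minimal number of edges of a connecting path). For a vertex $x$, $U_n(x)=\{y:d(x,y)\le n\}$ and $D_n(x)=\ln(\#U_n(x))/\ln n$. The lower and upper internal scaling dimensions at $x$ are $\underline D_S(x)=\liminf_{n\to\infty}D_n(x)$ and $\overline D_S(x)=\limsup_{n\to\infty}D_n(x)$; if they coincide the common value is $D_S(x)$, and if $D_S(x)=D$ for all $x$ the graph has internal scaling dimension $D$. A clique is a maximal complete subgraph. The clique graph $G_{cl}$ has as vertices the cliques of $G$, two distinct cliques being adjacent iff they share at least one vertex; $U^{cl}_n(C)$ is the ball of radius $n$ around $C$ in the graph metric of $G_{cl}$. *)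

From Stdlib Require Import Reals List.
From Coquelicot Require Import Coquelicot.
Import ListNotations.
Set Implicit Arguments.

(* A graph on an arbitrary (possibly infinite) type T is given by an adjacency
   relation [adj]; vertices are identified up to an equivalence [eqv]
   ([eqv = eq] for ordinary graphs, extensional equality for cliques). *)

Fixpoint dist_le {T : Type} (eqv : T -> T -> Prop) (adj : T -> T -> Prop)
  (n : nat) (x y : T) : Prop :=
  match n with
  | O => eqv x y
  | S m => dist_le eqv adj m x y \/ exists z, dist_le eqv adj m x z /\ adj z y
  end.

Definition card_mod {T : Type} (eqv : T -> T -> Prop) (P : T -> Prop) (k : nat) : Prop :=
  exists l : list T,
    length l = k /\
    (forall a, In a l -> P a) /\
    (forall y, P y -> exists a, In a l /\ eqv a y) /\
    ForallOrdPairs (fun a b => ~ eqv a b) l.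

Definition simple_graph {V : Type} (adj : V -> V -> Prop) : Prop :=
  (forall x y, adj x y -> adj y x) /\ (forall x, ~ adj x x).

Definition infinite_type (V : Type) : Prop := ~ exists l : list V, forall x, In x l.

Definition connected {V : Type} (adj : V -> V -> Prop) : Prop :=
  forall x y : V, exists n, dist_le eq adj n x y.

Definition bounded_degree {V : Type} (adj : V -> V -> Prop) (v : nat) : Prop :=
  forall x, exists l : list V, (length l <= v)%nat /\ forall y, adj x y -> In y l.

Definition has_scaling_dim_at {T : Type} (eqv : T -> T -> Prop) (adj : T -> T -> Prop)
  (x : T) (D : R) : Prop :=
  exists c : nat -> nat,
    (forall n, card_mod eqv (dist_le eqv adj n x) (c n)) /\
    is_lim_seq (fun n => ln (INR (c n)) / ln (INR n)) (Finite D).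

Definition complete_set {V : Type} (adj : V -> V -> Prop) (C : V -> Prop) : Prop :=
  forall x y, C x -> C y -> x <> y -> adj x y.

Definition is_clique {V : Type} (adj : V -> V -> Prop) (C : V -> Prop) : Prop :=
  complete_set adj C /\
  (forall y, ~ C y -> exists x, C x /\ x <> y /\ ~ adj x y).

Definition set_eqv {V : Type} (C C' : V -> Prop) : Prop := forall x, C x <-> C' x.

Definition cl_adj {V : Type} (adj : V -> V -> Prop) (C C' : V -> Prop) : Prop :=
  is_clique adj C /\ is_clique adj C' /\ ~ set_eqv C C' /\ exists x, C x /\ C' x.

From Stdlib Require Import Reals List Lra Lia Classical ClassicalEpsilon.
From Coquelicot Require Import Coquelicot.
Import ListNotations.

(* Fix a vertex x0 of C. Every vertex within distance n of x0 lies in a clique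
   within clique-distance n of C: extend each edge of a path to a maximal clique,
   which exists because neighbourhoods are finite. A clique has at most v + 1
   vertices, so #U_n(x0) <= (v + 1) #U^cl_n(C). Conversely a clique within
   clique-distance n of C is a subset of {y} ∪ N(y) for any of its vertices y, and y
   lies within distance n + 1 of x0, so #U^cl_n(C) <= 2^(v + 1) #U_(n+1)(x0).
   Constant factors and the shift n -> n + 1 do not affect lim ln(#U_n) / ln n. *)

Local Open Scope nat_scope.

Section SetoidCounting.

Variables (T : Type) (eqv : T -> T -> Prop).
Hypothesis eqv_refl : forall a, eqv a a.
Hypothesis eqv_sym : forall a b, eqv a b -> eqv b a.
Hypothesis eqv_trans : forall a b c, eqv a b -> eqv b c -> eqv a c.

Lemma representatives_in (P : T -> Prop) (L : list T) : exists l : list T,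
  length l <= length L /\ (forall a, In a l -> P a) /\
  (forall b, In b L -> P b -> exists a, In a l /\ eqv a b) /\
  ForallOrdPairs (fun a b => ~ eqv a b) l.
Proof.
  induction L as [|b L IH].
  - exists []. repeat split; simpl; try tauto; constructor.
  - destruct IH as (l & Hlen & HP & Hcov & Hsep).
    destruct (classic (P b /\ ~ exists a, In a l /\ eqv a b)) as [[Pb Hnew]|Hold].
    + exists (b :: l). repeat split.
      * simpl; lia.
      * intros a [<-|Ha]; auto.
      * intros c [<-|Hc] Pc; [exists b; split; [left|]; auto|].
        destruct (Hcov c Hc Pc) as (a & Ha & Hac). exists a; split; [right|]; auto.
      * constructor; auto. apply Forall_forall. intros a Ha Hba.
        apply Hnew. exists a. auto.
    + exists l. repeat split; auto.
      * simpl; lia.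
      * intros c [<-|Hc] Pc; auto.
        apply NNPP. intro Hno. apply Hold. split; auto.
Qed.

Lemma card_mod_of_cover (P : T -> Prop) (L : list T) :
  (forall a b, P a -> eqv a b -> P b) ->
  (forall y, P y -> exists b, In b L /\ eqv b y) ->
  exists k, k <= length L /\ card_mod eqv P k.
Proof.
  intros HPinv Hcov.
  destruct (representatives_in P L) as (l & Hlen & HP & Hrep & Hsep).
  exists (length l). split; [exact Hlen|].
  exists l. repeat split; auto.
  intros y Py. destruct (Hcov y Py) as (b & Hb & Hby).
  destruct (Hrep b Hb (HPinv y b Py (eqv_sym _ _ Hby))) as (a & Ha & Hab).
  exists a. eauto.
Qed.

End SetoidCounting.

Lemma dist_le_refl {T : Type} (eqv adj : T -> T -> Prop) n x :
  (forall a, eqv a a) -> dist_le eqv adj n x x.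
Proof. intro Hrefl. induction n as [|n IH]; simpl; auto. Qed.

Lemma card_mod_pos {T : Type} (eqv : T -> T -> Prop) (P : T -> Prop) k x :
  card_mod eqv P k -> P x -> 1 <= k.
Proof.
  intros (l & <- & _ & Hcov & _) Px.
  destruct (Hcov x Px) as (a & Ha & _).
  destruct l; [destruct Ha | simpl; lia].
Qed.

Lemma card_mod_eq_le_length {T : Type} (P : T -> Prop) k (L : list T) :
  card_mod eq P k -> (forall y, P y -> In y L) -> k <= length L.
Proof.
  intros (l & <- & HP & _ & Hsep) HL.
  apply NoDup_incl_length.
  - apply NoDup_iff_ForallOrdPairs. exact Hsep.
  - intros y Hy. apply HL, HP, Hy.
Qed.

Lemma length_flat_map_le {A B : Type} (f : A -> list B) (m : nat) (l : list A) :
  (forall a, In a l -> length (f a) <= m) -> length (flat_map f l) <= m * length l.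
Proof.
  induction l as [|a l IH]; intro Hf; simpl; [lia|].
  rewrite length_app.
  specialize (Hf a (or_introl eq_refl)) as Ha.
  assert (length (flat_map f l) <= m * length l) by (apply IH; intros; apply Hf; right; auto).
  lia.
Qed.

Fixpoint sublists {A : Type} (l : list A) : list (list A) :=
  match l with
  | [] => [[]]
  | a :: l => sublists l ++ map (cons a) (sublists l)
  end.

Lemma length_sublists {A : Type} (l : list A) : length (sublists l) = 2 ^ length l.
Proof.
  induction l as [|a l IH]; simpl; [reflexivity|].
  rewrite length_app, length_map, IH. lia.
Qed.

Lemma sublists_complete {A : Type} (K : A -> Prop) (l : list A) :
  exists s, In s (sublists l) /\ forall z, In z s <-> In z l /\ K z.
Proof.
  induction l as [|a l IH]; simpl.
  - exists []. simpl. tauto.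
  - destruct IH as (s & Hs & Hsz). destruct (classic (K a)) as [Ka|Ka].
    + exists (a :: s). split.
      * apply in_or_app. right. apply in_map, Hs.
      * intro z. simpl. rewrite Hsz. intuition congruence.
    + exists s. split.
      * apply in_or_app. left. exact Hs.
      * intro z. rewrite Hsz. intuition congruence.
Qed.

Section CliqueGraph.

Context {V : Type} (adj : V -> V -> Prop).

Lemma set_eqv_refl (K : V -> Prop) : set_eqv K K.
Proof. intro; tauto. Qed.

Lemma set_eqv_sym (K K' : V -> Prop) : set_eqv K K' -> set_eqv K' K.
Proof. intros H x; specialize (H x); tauto. Qed.

Lemma set_eqv_trans (K K' K'' : V -> Prop) :
  set_eqv K K' -> set_eqv K' K'' -> set_eqv K K''.
Proof. intros H H' x; specialize (H x); specialize (H' x); tauto. Qed.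

Lemma is_clique_set_eqv K K' : is_clique adj K -> set_eqv K K' -> is_clique adj K'.
Proof.
  intros [Hcompl Hmax] HKK'. split.
  - intros x y Kx Ky. apply Hcompl; apply HKK'; assumption.
  - intros y K'y. destruct (Hmax y) as (x & Kx & Hxy & Hna).
    + intro Ky. apply K'y, HKK', Ky.
    + exists x. split; [apply HKK', Kx | auto].
Qed.

Lemma cl_adj_set_eqv_r Z K K' : cl_adj adj Z K -> set_eqv K K' -> cl_adj adj Z K'.
Proof.
  intros (HZ & HK & HZK & x & Zx & Kx) HKK'. split; [exact HZ | split; [|split]].
  - eapply is_clique_set_eqv; eauto.
  - intro HZK'. apply HZK, (set_eqv_trans _ _ _ HZK'), set_eqv_sym, HKK'.
  - exists x. split; [|apply HKK']; assumption.
Qed.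

Lemma cl_dist_set_eqv_r n C K K' :
  dist_le set_eqv (cl_adj adj) n C K -> set_eqv K K' ->
  dist_le set_eqv (cl_adj adj) n C K'.
Proof.
  revert K K'. induction n as [|n IH]; simpl; intros K K' HCK HKK'.
  - eapply set_eqv_trans; eauto.
  - destruct HCK as [HCK|(Z & HCZ & HZK)].
    + left. eapply IH; eauto.
    + right. exists Z. split; [|eapply cl_adj_set_eqv_r]; eauto.
Qed.

Lemma cl_dist_is_clique n C K :
  is_clique adj C -> dist_le set_eqv (cl_adj adj) n C K -> is_clique adj K.
Proof.
  revert K. induction n as [|n IH]; simpl; intros K HC HCK.
  - eapply is_clique_set_eqv; eauto.
  - destruct HCK as [HCK|(Z & _ & _ & HK & _)]; eauto.
Qed.

Lemma clique_inhabited (u : V) K : is_clique adj K -> exists x, K x.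
Proof.
  intros [_ Hmax]. destruct (classic (K u)) as [Ku|Ku]; [eauto|].
  destruct (Hmax u Ku) as (x & Kx & _). eauto.
Qed.

Lemma cl_dist_vertex_dist n C K x0 y : is_clique adj C -> C x0 ->
  dist_le set_eqv (cl_adj adj) n C K -> K y -> dist_le eq adj (S n) x0 y.
Proof.
  intros HC Cx0. revert K y. induction n as [|n IH]; simpl; intros K y HCK Ky.
  - destruct (classic (x0 = y)) as [<-|Hne]; [left; reflexivity|].
    right. exists x0. split; [reflexivity|]. apply HC; auto. apply HCK, Ky.
  - destruct HCK as [HCK|(Z & HCZ & _ & [HKcompl _] & _ & w & Zw & Kw)].
    + left. eapply IH; eauto.
    + specialize (IH Z w HCZ Zw).
      destruct (classic (w = y)) as [<-|Hne]; [left; exact IH|].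
      right. exists w. auto.
Qed.

Hypothesis adj_sym : forall x y, adj x y -> adj y x.

Lemma complete_set_extend (S l : list V) : complete_set adj (fun z => In z S) ->
  exists S', complete_set adj (fun z => In z S') /\ incl S S' /\
    forall y, In y l -> In y S' \/ exists s, In s S' /\ s <> y /\ ~ adj s y.
Proof.
  revert S. induction l as [|y l IH]; intros S HS.
  - exists S. repeat split; [exact HS | apply incl_refl | intros y []].
  - destruct (classic (forall s, In s S -> s <> y -> adj s y)) as [Hy|Hy].
    + destruct (IH (y :: S)) as (S' & HS' & Hincl & Hl).
      * intros a b [<-|Ha] [<-|Hb] Hab; auto; contradiction.
      * exists S'. repeat split; [exact HS' | intros z Hz; apply Hincl; right; exact Hz|].
        intros z [<-|Hz]; [left; apply Hincl; left; reflexivity | auto].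
    + destruct (IH S HS) as (S' & HS' & Hincl & Hl).
      exists S'. repeat split; [exact HS' | exact Hincl|].
      intros z [<-|Hz]; [right | auto].
      apply not_all_ex_not in Hy as (s & Hs).
      exists s. split; [apply Hincl|]; tauto.
Qed.

Variable nb : V -> list V.
Hypothesis adj_in_nb : forall x y, adj x y -> In y (nb x).

Lemma edge_in_clique a b : adj a b -> exists K, is_clique adj K /\ K a /\ K b.
Proof.
  intro Hab.
  destruct (complete_set_extend [a; b] (nb a)) as (S & HS & Hincl & Hmax).
  - intros x y [<-|[<-|[]]] [<-|[<-|[]]] Hxy; auto; contradiction.
  - exists (fun z => In z S). repeat split.
    + exact HS.
    + intros y Sy. destruct (classic (adj a y)) as [Hay|Hay].
      * destruct (Hmax y (adj_in_nb a y Hay)); tauto.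
      * exists a. repeat split; [apply Hincl; left; reflexivity | | exact Hay].
        intros ->. apply Sy, Hincl. left. reflexivity.
    + apply Hincl. left. reflexivity.
    + apply Hincl. right. left. reflexivity.
Qed.

Lemma clique_incl_nbhd K y z : is_clique adj K -> K y -> K z -> In z (y :: nb y).
Proof.
  intros [Hcompl _] Ky Kz. destruct (classic (y = z)) as [->|Hne]; [left; reflexivity|].
  right. apply adj_in_nb, Hcompl; assumption.
Qed.

Lemma vertex_dist_cl_dist n C x0 y : is_clique adj C -> C x0 ->
  dist_le eq adj n x0 y -> exists K, dist_le set_eqv (cl_adj adj) n C K /\ K y.
Proof.
  intros HC Cx0. revert y. induction n as [|n IH]; simpl; intros y Hxy.
  - subst y. exists C. split; [apply set_eqv_refl | exact Cx0].
  - destruct Hxy as [Hxy|(z & Hxz & Hzy)].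
    + destruct (IH y Hxy) as (K & HCK & Ky). exists K. auto.
    + destruct (IH z Hxz) as (K & HCK & Kz).
      destruct (edge_in_clique z y Hzy) as (K' & HK' & K'z & K'y).
      exists K'. split; [|exact K'y].
      destruct (classic (set_eqv K K')) as [HKK'|HKK'].
      * left. eapply cl_dist_set_eqv_r; eauto.
      * right. exists K. split; [exact HCK|].
        split; [exact (cl_dist_is_clique n C K HC HCK)|].
        split; [exact HK'|]. split; [exact HKK'|]. exists z. auto.
Qed.

Variable v : nat.
Hypothesis length_nb : forall x, length (nb x) <= v.

Lemma clique_vertex_list K : exists l : list V,
  length l <= S v /\ (is_clique adj K -> forall z, K z -> In z l).
Proof.
  destruct (classic (exists w, K w)) as [[w Kw]|Hempty].
  - exists (w :: nb w). split; [simpl; apply le_n_S, length_nb|].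
    intros HK z Kz. exact (clique_incl_nbhd K w z HK Kw Kz).
  - exists []. split; [simpl; lia|]. intros _ z Kz. apply Hempty. eauto.
Qed.

Lemma ball_card_le_clique_ball n C x0 cx ccl : is_clique adj C -> C x0 ->
  card_mod eq (dist_le eq adj n x0) cx ->
  card_mod set_eqv (dist_le set_eqv (cl_adj adj) n C) ccl ->
  cx <= S v * ccl.
Proof.
  intros HC Cx0 Hcx (lc & <- & Hlc & Hcov & _).
  destruct (choice _ clique_vertex_list) as (vertices & Hvertices).
  eapply Nat.le_trans; [apply (card_mod_eq_le_length _ _ (flat_map vertices lc) Hcx)|].
  - intros y Hy.
    destruct (vertex_dist_cl_dist n C x0 y HC Cx0 Hy) as (K & HCK & Ky).
    destruct (Hcov K HCK) as (a & Ha & HaK).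
    apply in_flat_map. exists a. split; [exact Ha|].
    apply Hvertices; [|apply HaK, Ky].
    exact (cl_dist_is_clique n C a HC (Hlc a Ha)).
  - apply length_flat_map_le. intros a _. apply Hvertices.
Qed.

Lemma clique_ball_card_le_ball n C x0 cx : is_clique adj C -> C x0 ->
  card_mod eq (dist_le eq adj (S n) x0) cx ->
  exists k, k <= 2 ^ S v * cx /\ card_mod set_eqv (dist_le set_eqv (cl_adj adj) n C) k.
Proof.
  intros HC Cx0 (lx & <- & _ & Hcov & _).
  set (L := flat_map (fun y => map (fun s z => In z s) (sublists (y :: nb y))) lx).
  destruct (card_mod_of_cover _ set_eqv set_eqv_refl set_eqv_sym set_eqv_trans
              (dist_le set_eqv (cl_adj adj) n C) L) as (k & HkL & Hk).
  - intros K K' HCK HKK'. exact (cl_dist_set_eqv_r n C K K' HCK HKK').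
  - intros K HCK.
    pose proof (cl_dist_is_clique n C K HC HCK) as HK.
    destruct (clique_inhabited x0 K HK) as (y & Ky).
    destruct (Hcov y (cl_dist_vertex_dist n C K x0 y HC Cx0 HCK Ky)) as (a & Ha & <-).
    destruct (sublists_complete K (a :: nb a)) as (s & Hs & Hsz).
    exists (fun z => In z s). split.
    + apply in_flat_map. exists a. split; [exact Ha|]. exact (in_map (fun s z => In z s) _ _ Hs).
    + intro z. rewrite Hsz. split; [tauto|].
      intro Kz. split; [exact (clique_incl_nbhd K a z HK Ky Kz) | exact Kz].
  - exists k. split; [|exact Hk].
    eapply Nat.le_trans; [exact HkL|]. apply length_flat_map_le.
    intros a _. rewrite length_map, length_sublists.
    apply Nat.pow_le_mono_r; [lia|]. simpl. apply le_n_S, length_nb.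
Qed.

End CliqueGraph.

Local Open Scope R_scope.

Lemma ln_INR_pos (n : nat) : (2 <= n)%nat -> 0 < ln (INR n).
Proof.
  intro Hn. apply le_INR in Hn. simpl in Hn.
  rewrite <- ln_1. apply ln_increasing; lra.
Qed.

Lemma ln_INR_le_mul (a b m : nat) : (1 <= a)%nat -> (a <= m * b)%nat ->
  ln (INR a) <= ln (INR m) + ln (INR b).
Proof.
  intros Ha Hab.
  assert (Hm : (1 <= m)%nat) by (destruct m; lia).
  assert (Hb : (1 <= b)%nat) by (destruct b; lia).
  apply lt_0_INR in Ha, Hm, Hb.
  rewrite <- ln_mult, <- mult_INR by assumption.
  apply ln_le; [exact Ha | apply le_INR, Hab].
Qed.

Lemma is_lim_seq_div_ln (A : R) : is_lim_seq (fun n => A / ln (INR n)) 0.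
Proof.
  replace (Finite 0) with (Rbar_mult A (Rbar_inv p_infty)) by (simpl; f_equal; ring).
  apply (is_lim_seq_scal_l (fun n => / ln (INR n))), is_lim_seq_inv; [|discriminate].
  eapply filterlim_comp; [apply is_lim_seq_INR | apply is_lim_ln_p].
Qed.

Lemma is_lim_seq_ln_succ_div_ln : is_lim_seq (fun n => ln (INR (S n)) / ln (INR n)) 1.
Proof.
  apply is_lim_seq_le_le_loc with (u := fun _ => 1) (w := fun n => 1 + ln 2 / ln (INR n)).
  - exists 2%nat. intros n Hn. pose proof (ln_INR_pos n Hn) as Hln.
    assert (H2n : 2 <= INR n) by (apply le_INR in Hn; simpl in Hn; lra).
    rewrite S_INR. split.
    + apply Rle_div_r; [exact Hln|]. rewrite Rmult_1_l. apply ln_le; lra.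
    + apply Rle_div_l; [exact Hln|].
      replace ((1 + ln 2 / ln (INR n)) * ln (INR n)) with (ln (INR n) + ln 2) by (field; lra).
      rewrite <- ln_mult by lra. apply ln_le; lra.
  - apply is_lim_seq_const.
  - replace (Finite 1) with (Rbar_plus 1 0) by (simpl; f_equal; ring).
    apply is_lim_seq_plus'; [apply is_lim_seq_const | apply is_lim_seq_div_ln].
Qed.

Lemma is_lim_seq_log_ratio_succ (c : nat -> nat) (D : R) :
  is_lim_seq (fun n => ln (INR (c n)) / ln (INR n)) D ->
  is_lim_seq (fun n => ln (INR (c (S n))) / ln (INR n)) D.
Proof.
  intro HD.
  apply is_lim_seq_ext_loc with
    (u := fun n => ln (INR (c (S n))) / ln (INR (S n)) * (ln (INR (S n)) / ln (INR n))).
  - exists 2%nat. intros n Hn.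
    pose proof (ln_INR_pos n Hn). pose proof (ln_INR_pos (S n) (le_S _ _ Hn)).
    field. lra.
  - replace (Finite D) with (Rbar_mult D 1) by (simpl; f_equal; ring).
    apply is_lim_seq_mult'; [exact (proj1 (is_lim_seq_incr_1 _ D) HD) |].
    apply is_lim_seq_ln_succ_div_ln.
Qed.

Lemma is_lim_seq_log_ratio_squeeze (a b : nat -> nat) (m1 m2 : nat) (D : R) :
  (forall n, 1 <= a n)%nat -> (forall n, a n <= m1 * b n)%nat ->
  (forall n, b n <= m2 * a (S n))%nat ->
  is_lim_seq (fun n => ln (INR (a n)) / ln (INR n)) D ->
  is_lim_seq (fun n => ln (INR (b n)) / ln (INR n)) D.
Proof.
  intros Ha_pos Hab Hba HD.
  assert (Hb_pos : forall n, (1 <= b n)%nat).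
  { intro n. specialize (Ha_pos n). specialize (Hab n). destruct (b n); lia. }
  apply is_lim_seq_le_le_loc with
    (u := fun n => ln (INR (a n)) / ln (INR n) + - ln (INR m1) / ln (INR n))
    (w := fun n => ln (INR m2) / ln (INR n) + ln (INR (a (S n))) / ln (INR n)).
  - exists 2%nat. intros n Hn.
    assert (Hinv : 0 <= / ln (INR n)) by apply Rlt_le, Rinv_0_lt_compat, ln_INR_pos, Hn.
    pose proof (ln_INR_le_mul _ _ _ (Ha_pos n) (Hab n)).
    pose proof (ln_INR_le_mul _ _ _ (Hb_pos n) (Hba n)).
    rewrite <- !Rdiv_plus_distr. split; apply Rmult_le_compat_r; lra.
  - replace (Finite D) with (Rbar_plus D 0) by (simpl; f_equal; ring).
    apply is_lim_seq_plus'; [exact HD | apply is_lim_seq_div_ln].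
  - replace (Finite D) with (Rbar_plus 0 D) by (simpl; f_equal; ring).
    apply is_lim_seq_plus'; [apply is_lim_seq_div_ln | apply is_lim_seq_log_ratio_succ, HD].
Qed.

Theorem mainTheorem4 (V : Type) (adj : V -> V -> Prop) (v : nat) (D : R) :
  simple_graph adj ->
  infinite_type V ->
  connected adj ->
  bounded_degree adj v ->
  (forall x : V, has_scaling_dim_at eq adj x D) ->
  forall C : V -> Prop, is_clique adj C ->
    has_scaling_dim_at set_eqv (cl_adj adj) C D.
Proof.
  intros [adj_sym _] Hinf _ Hdeg Hdim C HC.
  assert (Hu : exists u : V, True).
  { apply NNPP. intro Hempty. apply Hinf. exists []. intro x. apply Hempty. eauto. }
  destruct Hu as [u _].
  destruct (choice _ Hdeg) as (nb & Hnb).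
  assert (length_nb : forall x, (length (nb x) <= v)%nat) by (intro; apply Hnb).
  assert (adj_in_nb : forall x y, adj x y -> In y (nb x)) by (intro; apply Hnb).
  destruct (clique_inhabited adj u C HC) as (x0 & Cx0).
  destruct (Hdim x0) as (cx & Hcx & Hlim).
  destruct (choice _ (fun n => clique_ball_card_le_ball adj nb adj_in_nb v length_nb
                                 n C x0 _ HC Cx0 (Hcx (S n)))) as (ccl & Hccl).
  exists ccl. split; [intro n; apply Hccl|].
  apply (is_lim_seq_log_ratio_squeeze cx ccl (S v) (2 ^ S v));
    [| | intro n; apply Hccl | exact Hlim].
  - intro n. apply (card_mod_pos _ _ _ x0 (Hcx n)), dist_le_refl. reflexivity.
  - intro n. apply (ball_card_le_clique_ball adj adj_sym nb adj_in_nb v length_nb n C x0);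
      [exact HC | exact Cx0 | apply Hcx | apply Hccl].
Qed.
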